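(* Let $n\ge 2$, let $m\ge3$ be odd, let $\mathcal{A}$ be an $m$th order $n$-dimensional complete Hankel tensor, and let $x=(x_1,\dots,x_n)^\top$ be a Z-eigenvector of $\mathcal{A}$ associated with a Z-eigenvalue $\lambda$. If $\lambda>0$, then $x_i\ge0$ for all odd $i$ and $x_1>0$; if $\lambda<0$, then $x_i\le 0$ for all odd $i$ and $x_1<0$.
   Context: A complete Hankel tensor is a tensor of the form $\mathcal{A}=\sum_{k=1}^r\alpha_k(u_k)^m$ with $\alpha_k>0$, $u_k=(1,u_k,u_k^2,\dots,u_k^{n-1})^\top$ for pairwise distinct reals $u_1,\dots,u_r$, where $w^m$ denotes the tensor with entries $w_{i_1}\cdots w_{i_m}$. For $\mathcal{A}=(a_{i_1\cdots i_m})$ and $x\in\mathbb{R}^n$, $\mathcal{A}x^{m-1}$ is the vector with $i$th component $\sum_{i_2,\dots,i_m=1}^n a_{ii_2\cdots i_m}x_{i_2}\cdots x_{i_m}$. A real $\lambda$ is a Z-eigenvalue with Z-eigenvector $x\in\mathbb{R}^n$ if $x^\top x=1$ and $\mathcal{A}x^{m-1}=\lambda x$. *)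

From HB Require Import structures.
From mathcomp Require Import all_boot all_order all_algebra.
Set Implicit Arguments. Unset Strict Implicit. Unset Printing Implicit Defensive.
Import Order.TTheory GRing.Theory Num.Theory.
Local Open Scope ring_scope.

(* An m-th order n-dimensional real tensor: entries a_{i_1 ... i_m} indexed by
   functions 'I_m -> 'I_n (0-based indices). *)
Definition tensor (R : Type) (m n : nat) : Type := {ffun 'I_m -> 'I_n} -> R.

Definition rank_one (R : nzRingType) (m n : nat) (w : 'I_n -> R) : tensor R m n :=
  fun g => \prod_(j < m) w (g j).

Definition vander_vec (R : nzRingType) (n : nat) (u : R) : 'I_n -> R :=
  fun i => u ^+ i.

Definition complete_hankel (R : realFieldType) (m n : nat) (A : tensor R m n) : Prop :=
  exists (r : nat) (alpha u : 'I_r -> R),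
    (forall k, 0 < alpha k) /\ injective u /\
    forall g, A g = \sum_(k < r) alpha k * @rank_one R m n (@vander_vec R n (u k)) g.

(* (A x^{m-1})_i = sum_{i_2..i_m} a_{i i_2 ... i_m} x_{i_2} ... x_{i_m}:
   sum over all index functions whose first index is i. *)
Definition tensor_apply (R : nzRingType) (m n : nat) (A : tensor R m n)
    (x : 'I_n -> R) (i : 'I_n) : R :=
  \sum_(g : {ffun 'I_m -> 'I_n} | [forall j : 'I_m, (val j == 0%N) ==> (g j == i)])
     A g * \prod_(j < m | val j != 0%N) x (g j).

Definition Z_eigenpair (R : nzRingType) (m n : nat) (A : tensor R m n)
    (lambda : R) (x : 'I_n -> R) : Prop :=
  \sum_(i < n) x i ^+ 2 = 1 /\ forall i, tensor_apply A x i = lambda * x i.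

(* For [A = sum_k alpha_k (u_k)^(m+1)] with [m] even, the i-th entry of
   [A x^m] is [sum_k alpha_k u_k^i <u_k, x>^m]: every summand is nonnegative
   when i is even, and for i = 0 the entry vanishes only if all inner products
   [<u_k, x>] do, which forces [A x^m = 0], hence [lambda x = 0], impossible for
   a unit vector x and lambda <> 0. Since [lambda x_i = (A x^m)_i], the signs of
   the even-indexed entries of x (and the strict sign of x_0) follow. *)

From HB Require Import structures.
From mathcomp Require Import all_boot all_order all_algebra.

Set Implicit Arguments.
Unset Strict Implicit.
Unset Printing Implicit Defensive.

Import Order.TTheory GRing.Theory Num.Theory.
Local Open Scope ring_scope.

Section IndexFunctions.
Variables (R : comNzRingType) (n m : nat).

Lemma head_index_fixedE (i : 'I_n) (g : {ffun 'I_m.+1 -> 'I_n}) :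
  [forall j : 'I_m.+1, (val j == 0%N) ==> (g j == i)] = (g ord0 == i).
Proof.
apply/forallP/idP => [/(_ ord0) //| gi j]; apply/implyP => /eqP j0.
by rewrite (_ : j = ord0) //; apply: val_inj.
Qed.

Lemma prod_tail_ord (F : 'I_m.+1 -> R) :
  \prod_(j < m.+1 | val j != 0%N) F j = \prod_(j < m) F (lift ord0 j).
Proof. by rewrite big_mkcond big_ord_recl /= mul1r. Qed.

(* Expand [(sum f)^m] as a product of [m.+1] sums whose first factor is the
   indicator of [i], then distribute. *)
Lemma sum_head_fixed_prod_tail (i : 'I_n) (f : 'I_n -> R) :
  \sum_(g : {ffun 'I_m.+1 -> 'I_n} | g ord0 == i)
     \prod_(j < m) f (g (lift ord0 j)) = (\sum_l f l) ^+ m.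
Proof.
pose F (j : 'I_m.+1) (l : 'I_n) : R :=
  if val j == 0%N then (if l == i then 1 else 0) else f l.
have -> : (\sum_l f l) ^+ m = \prod_(j < m.+1) \sum_l F j l.
  by rewrite big_ord_recl /F /= -big_mkcond big_pred1_eq mul1r prodr_const card_ord.
rewrite bigA_distr_bigA big_mkcond /=; apply: eq_bigr => g _.
by rewrite big_ord_recl /F /=; case: (g ord0 == i); rewrite ?mul1r ?mul0r.
Qed.

End IndexFunctions.

Lemma tensor_apply_lincomb (R : comNzRingType) (m n r : nat) (c : 'I_r -> R)
    (B : 'I_r -> tensor R m n) (A : tensor R m n) (x : 'I_n -> R) (i : 'I_n) :
  (forall g, A g = \sum_k c k * B k g) ->
  tensor_apply A x i = \sum_k c k * tensor_apply (B k) x i.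
Proof.
move=> defA; rewrite /tensor_apply.
under eq_bigr => g _ do rewrite defA mulr_suml.
rewrite exchange_big; apply: eq_bigr => k _.
by rewrite mulr_sumr; apply: eq_bigr => g _; rewrite mulrA.
Qed.

Lemma tensor_apply_rank_one (R : comNzRingType) (m n : nat) (w x : 'I_n -> R)
    (i : 'I_n) :
  tensor_apply (@rank_one R m.+1 n w) x i = w i * (\sum_l w l * x l) ^+ m.
Proof.
rewrite /tensor_apply -(@sum_head_fixed_prod_tail _ _ m i) mulr_sumr.
apply: eq_big => [g | g]; rewrite head_index_fixedE // => /eqP gi.
by rewrite /rank_one prod_tail_ord big_ord_recl gi -mulrA -big_split.
Qed.

Definition hankel_apply (R : nzRingType) (m : nat) {n r : nat} (alpha u : 'I_r -> R)
    (x : 'I_n -> R) (i : nat) : R :=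
  \sum_(k < r) alpha k * (u k ^+ i * (\sum_(l < n) u k ^+ l * x l) ^+ m).

Lemma complete_hankel_applyE (R : realFieldType) (m n : nat) (A : tensor R m.+1 n) :
  complete_hankel A ->
  exists r (alpha u : 'I_r -> R), (forall k, 0 < alpha k) /\
    forall x i, tensor_apply A x i = hankel_apply m alpha u x i.
Proof.
move=> [r [alpha [u [alpha_gt0 [_ defA]]]]]; exists r, alpha, u; split=> // x i.
rewrite (tensor_apply_lincomb _ _ defA); apply: eq_bigr => k _.
by rewrite tensor_apply_rank_one.
Qed.

Section HankelApply.
Variables (R : realFieldType) (m n r : nat) (alpha u : 'I_r -> R) (x : 'I_n -> R).
Hypotheses (alpha_gt0 : forall k, 0 < alpha k) (m_even : ~~ odd m).

Lemma hankel_term_even_ge0 (i : nat) (k : 'I_r) : ~~ odd i ->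
  0 <= alpha k * (u k ^+ i * (\sum_(l < n) u k ^+ l * x l) ^+ m).
Proof.
move=> i_even; apply: mulr_ge0; first exact: ltW.
by apply: mulr_ge0; apply: exprn_even_ge0.
Qed.

Lemma hankel_apply_even_ge0 (i : nat) :
  ~~ odd i -> 0 <= hankel_apply m alpha u x i.
Proof. by move=> i_even; apply: sumr_ge0 => k _; apply: hankel_term_even_ge0. Qed.

(* The summands at index 0 are nonnegative, so if they sum to 0 every inner
   product [sum_l u_k^l x_l] vanishes, and with it every summand at every index. *)
Lemma hankel_apply0_eq0 : (0 < m)%N ->
  hankel_apply m alpha u x 0 = 0 -> forall i, hankel_apply m alpha u x i = 0.
Proof.
move=> m_gt0 sum0 i; apply: big1 => k _.
have /eqP := psumr_eq0P (fun k _ => @hankel_term_even_ge0 0%N k isT) sum0 (i := k) isT.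
rewrite expr0 mul1r mulf_eq0 (gt_eqF (alpha_gt0 k)) expf_eq0 m_gt0 /=.
by move/eqP ->; rewrite expr0n gtn_eqF ?mulr0.
Qed.

End HankelApply.

Lemma sqr_norm1_neq0 (R : numDomainType) (n : nat) (x : 'I_n -> R) :
  \sum_(i < n) x i ^+ 2 = 1 -> exists i, x i != 0.
Proof.
move=> norm1; apply/existsP; rewrite -negb_forall.
apply: contra (oner_neq0 R) => /forallP x0.
by rewrite -norm1 big1 // => i _; rewrite (eqP (x0 i)) expr0n.
Qed.

Section CompleteHankelZEigen.
Variables (R : realFieldType) (m n : nat) (A : tensor R m.+1 n).
Variables (lambda : R) (x : 'I_n -> R).
Hypotheses (m_gt0 : (0 < m)%N) (m_even : ~~ odd m).
Hypotheses (A_hankel : complete_hankel A) (eig : Z_eigenpair A lambda x).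

Lemma Z_eigen_even_ge0 (i : 'I_n) : ~~ odd i -> 0 <= lambda * x i.
Proof.
have [r [alpha [u [alpha_gt0 defA]]]] := complete_hankel_applyE A_hankel.
by move=> i_even; rewrite -eig.2 defA hankel_apply_even_ge0.
Qed.

Lemma Z_eigen_head_gt0 (i : 'I_n) : val i = 0%N -> lambda != 0 -> 0 < lambda * x i.
Proof.
move=> i0 lambda_neq0; rewrite lt_def Z_eigen_even_ge0 ?i0 // andbT.
have [r [alpha [u [alpha_gt0 defA]]]] := complete_hankel_applyE A_hankel.
have [j xj_neq0] := sqr_norm1_neq0 eig.1.
apply: contra xj_neq0 => /eqP; rewrite -eig.2 defA i0 => /hankel_apply0_eq0.
move=> /(_ alpha_gt0 m_even m_gt0 j); rewrite -defA eig.2 => /eqP.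
by rewrite mulf_eq0 (negbTE lambda_neq0).
Qed.

End CompleteHankelZEigen.

Theorem proposition5 (R : realFieldType) (n m : nat) (A : tensor R m n)
    (lambda : R) (x : 'I_n -> R) :
  (2 <= n)%N -> (3 <= m)%N -> odd m ->
  complete_hankel A -> Z_eigenpair A lambda x ->
  (0 < lambda ->
     (forall i : 'I_n, ~~ odd (val i) -> 0 <= x i) /\
     (forall i : 'I_n, val i = 0%N -> 0 < x i)) /\
  (lambda < 0 ->
     (forall i : 'I_n, ~~ odd (val i) -> x i <= 0) /\
     (forall i : 'I_n, val i = 0%N -> x i < 0)).
Proof.
case: m A => [//|m] A _ m3 m_odd A_hankel eig.
have m_gt0 : (0 < m)%N by rewrite -ltnS ltnW.
have m_even : ~~ odd m := m_odd.
have even_ge0 := Z_eigen_even_ge0 m_even A_hankel eig.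
have head_gt0 := Z_eigen_head_gt0 m_gt0 m_even A_hankel eig.
split=> [lambda_gt0 | lambda_lt0]; split=> i hi.
- by rewrite -(pmulr_rge0 _ lambda_gt0) even_ge0.
- by rewrite -(pmulr_rgt0 _ lambda_gt0) head_gt0 ?gt_eqF.
- by rewrite -(nmulr_rge0 _ lambda_lt0) even_ge0.
- by rewrite -(nmulr_rgt0 _ lambda_lt0) head_gt0 ?lt_eqF.
Qed.
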